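(* Let $f:\mathbb{R}^d\to\mathbb{R}$ be Lipschitz continuous and SISTr. For $\delta>0$ and $x\in\mathbb{R}^d$, let $\epsilon_{x,\delta}>0$ be the smallest number such that $$\min\{f(x+\epsilon_{x,\delta}\mathbf{1})-f(x),\ f(x)-f(x-\epsilon_{x,\delta}\mathbf{1})\}=\delta.$$ Then for every bounded set $D\subset\mathbb{R}^d$: - $\sup_{x\in D}\epsilon_{x,\delta}<\infty$ for every $\delta>0$; - $\sup_{x\in D}\epsilon_{x,\delta}\downarrow0$ as $\delta\downarrow0$.
   Context: $\mathbf{1}$ is the all-ones vector in $\mathbb{R}^d$. A function $g:\mathbb{R}^d\to\mathbb{R}$ is SISTr (strictly increasing under scalar translation) if, for every $x\in\mathbb{R}^d$, the map $c\in\mathbb{R}\mapsto g(x+c\mathbf{1})$ is strictly increasing and maps $\mathbb{R}$ onto $\mathbb{R}$. *)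

From HB Require Import structures.
From mathcomp Require Import all_boot all_order all_algebra.
From mathcomp Require Import all_classical all_reals all_analysis.
Set Implicit Arguments. Unset Strict Implicit. Unset Printing Implicit Defensive.
Import Order.TTheory GRing.Theory Num.Theory.
Import numFieldNormedType.Exports.
Local Open Scope classical_set_scope.
Local Open Scope ring_scope.

Definition ones (R : realType) (d : nat) : 'rV[R]_d := const_mx 1.

Definition SISTr (R : realType) (d : nat) (g : 'rV[R]_d -> R) : Prop :=
  forall x : 'rV[R]_d,
    (forall c1 c2 : R, c1 < c2 -> g (x + c1 *: ones R d) < g (x + c2 *: ones R d))
    /\ (forall y : R, exists c : R, g (x + c *: ones R d) = y).

Definition gap (R : realType) (d : nat) (f : 'rV[R]_d -> R) (x : 'rV[R]_d) (e : R) : R :=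
  Num.min (f (x + e *: ones R d) - f x) (f x - f (x - e *: ones R d)).

Definition is_eps (R : realType) (d : nat) (f : 'rV[R]_d -> R) (x : 'rV[R]_d)
  (delta e : R) : Prop :=
  0 < e /\ gap f x e = delta /\ (forall e', 0 < e' -> gap f x e' = delta -> e <= e').

From HB Require Import structures.
From mathcomp Require Import all_boot all_order all_algebra.
From mathcomp Require Import all_classical all_reals all_analysis.
From mathcomp Require Import ring lra.
Import Order.TTheory GRing.Theory Num.Theory.
Import numFieldNormedType.Exports.
Local Open Scope classical_set_scope.
Local Open Scope ring_scope.

(* By SISTr, e |-> gap f x e increases strictly from gap f x 0 = 0 and is
   unbounded, so eps x delta <= E as soon as delta <= gap f x E (only
   gap f x (eps x delta) = delta is used: minimality in is_eps is automatic).
   If f is k-Lipschitz then x |-> gap f x e is 2k-Lipschitz, so for D inside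
   the ball of radius r a single E with gap f 0 E >= delta + 2kr bounds
   eps . delta on D.  For the limit, given e > 0 the continuous positive
   function gap f . e has a positive minimum m on that compact ball, hence
   eps x delta <= e on D whenever delta <= m. *)

Lemma ler_dist_min (R : realDomainType) (a b c e t : R) :
  `|a - c| <= t -> `|b - e| <= t -> `|Num.min a b - Num.min c e| <= t.
Proof.
have minB (x y z w : R) :
    z - t <= x -> w - t <= y -> Num.min z w - t <= Num.min x y.
  move=> zx wy; rewrite le_min !lerBlDr !ge_min.
  by rewrite -!lerBlDr zx wy orbT.
rewrite !ler_distl => /andP[ca ac] /andP[eb be].
apply/andP; split; first exact: minB.
by rewrite -lerBlDr; apply: minB; rewrite lerBlDr.
Qed.

Lemma klipschitz_continuous {R : numFieldType} {V W : normedModType R} {k : R}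
    {f : V -> W} :
  0 < k -> k.-lipschitz f -> continuous f.
Proof.
move=> k0 fk x; apply/cvgrPdist_lt => e e0; apply/nbhs_normP.
exists (e / k); first by rewrite /= divr_gt0.
move=> y /= xy; apply: le_lt_trans (fk (x, y) _) _; first by split.
by rewrite /= -ltr_pdivlMl // mulrC.
Qed.

Section ScalarTranslation.
Context {R : realType} {d : nat} {f : 'rV[R]_d -> R}.
Hypothesis f_SISTr : SISTr f.
Local Notation u := (ones R d).

Lemma SISTr_mono x : {mono (fun c => f (x + c *: u)) : c1 c2 / c1 <= c2}.
Proof. exact/le_mono/(proj1 (f_SISTr x)). Qed.

Lemma gap_lt x : {homo gap f x : e1 e2 / e1 < e2}.
Proof.
move=> e1 e2 e12; have := proj1 (f_SISTr x) _ _ e12.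
have : f (x - e2 *: u) < f (x - e1 *: u).
  by rewrite -!scaleNr; apply: (proj1 (f_SISTr x)); rewrite ltrN2.
rewrite /gap lt_min !gt_min; lra.
Qed.

Lemma gap0 x : gap f x 0 = 0.
Proof. by rewrite /gap scale0r addr0 subr0 subrr minxx. Qed.

Lemma gap_gt0 x e : 0 < e -> 0 < gap f x e.
Proof. by move=> e0; rewrite -(gap0 x); apply: gap_lt. Qed.

Lemma gap_unbounded x T : exists E, T <= gap f x E.
Proof.
have [c1 fc1] := proj2 (f_SISTr x) (f x + T).
have [c2 fc2] := proj2 (f_SISTr x) (f x - T).
pose E := Num.max c1 (- c2); exists E; rewrite /gap le_min -scaleNr.
have : f (x + c1 *: u) <= f (x + E *: u) by rewrite SISTr_mono le_max lexx.
have : f (x + (- E) *: u) <= f (x + c2 *: u).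
  by rewrite SISTr_mono lerNl le_max lexx orbT.
rewrite fc1 fc2; lra.
Qed.

Lemma is_eps_le {x delta e E} :
  is_eps f x delta e -> delta <= gap f x E -> e <= E.
Proof. by case=> _ [<- _]; rewrite (le_mono (gap_lt x)). Qed.

Lemma is_eps_homo {x delta1 delta2 e1 e2} :
  is_eps f x delta1 e1 -> is_eps f x delta2 e2 -> delta1 <= delta2 -> e1 <= e2.
Proof. by move=> eps1 [_ [<- _]]; apply: is_eps_le eps1. Qed.

End ScalarTranslation.

Lemma gap_klipschitz {R : realType} {d : nat} {f : 'rV[R]_d -> R} {k : R}
    (e : R) :
  k.-lipschitz f -> (k *+ 2).-lipschitz (fun x => gap f x e).
Proof.
move=> fk [x y] _ /=.
have shift c : `|f (x + c) - f (y + c)| <= k * `|x - y|.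
  by have := fk (x + c, y + c) (conj I I); rewrite /= opprD addrACA subrr addr0.
have dist_sub (a b a' b' : R) : `|a - b - (a' - b')| <= `|a - a'| + `|b - b'|.
  have -> : a - b - (a' - b') = (a - a') - (b - b') by ring.
  exact: ler_normB.
have fxy : `|f x - f y| <= k * `|x - y| by have := shift 0; rewrite !addr0.
rewrite mulr2n mulrDl; apply: ler_dist_min; apply: le_trans (dist_sub _ _ _ _) _.
  exact: lerD (shift _) fxy.
exact: lerD fxy (shift _).
Qed.

Lemma continuous_gt0_bounded_lbound {R : realType} {d : nat}
    {g : 'rV[R]_d -> R} {D : set 'rV[R]_d} :
  bounded_set D -> continuous g -> (forall x, 0 < g x) ->
  exists2 m, 0 < m & forall x, D x -> m <= g x.
Proof.
move=> /pinfty_ex_gt0[r r0 Dr] g_cont g_gt0.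
have ballE : closed_ball (0 : 'rV[R]_d) r = [set x | `|x| <= r].
  rewrite closed_ballE //; apply/seteqP.
  by split=> x; rewrite /closed_ball_ /= distrC subr0.
have ball_compact : compact (closed_ball (0 : 'rV[R]_d) r).
  apply: bounded_closed_compact; last exact: closed_ball_closed.
  rewrite ballE /= /bounded_near.
  near=> M => x /= /le_trans; apply; near: M.
  exact: nbhs_pinfty_ge (gtr0_real r0).
have ball_neq0 : closed_ball (0 : 'rV[R]_d) r !=set0.
  by exists 0; exact: closed_ballxx.
have [c _ c_min] :=
  EVT_min_rV ball_neq0 ball_compact (continuous_subspaceT g_cont).
by exists (g c) => // x /Dr xr; apply: c_min; rewrite inE ballE.
Unshelve. all: by end_near.
Qed.

Section SupImage.
Context {R : realType} {T : Type} {D : set T} {F : T -> R}.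

Lemma sup_image_le e : 0 <= e -> (forall x, D x -> F x <= e) -> sup (F @` D) <= e.
Proof.
move=> e_ge0 F_le; have [->|/set0P[x0 Dx0]] := eqVneq D set0.
  by rewrite image_set0 sup0.
by apply: ge_sup => [|_ [x Dx <-]]; [exists (F x0), x0 | exact: F_le].
Qed.

Lemma sup_image_ge0 : has_ubound (F @` D) -> (forall x, D x -> 0 <= F x) ->
  0 <= sup (F @` D).
Proof.
move=> F_ub F_ge0; have [->|/set0P[x0 Dx0]] := eqVneq D set0.
  by rewrite image_set0 sup0.
by apply: le_trans (F_ge0 _ Dx0) _; apply: ub_le_sup => //; exists x0.
Qed.

Lemma le_sup_image {G : T -> R} : has_ubound (G @` D) ->
  (forall x, D x -> F x <= G x) -> sup (F @` D) <= sup (G @` D).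
Proof.
move=> G_ub FG; have [->|/set0P[x0 Dx0]] := eqVneq D set0.
  by rewrite !image_set0.
apply: ge_sup => [|_ [x Dx <-]]; first by exists (F x0), x0.
by apply: le_trans (FG _ Dx) _; apply: ub_le_sup => //; exists x.
Qed.

End SupImage.

Section EpsilonBounds.
Context {R : realType} {d : nat} {f : 'rV[R]_d -> R} {eps : 'rV[R]_d -> R -> R}.
Context {k : R} {D : set 'rV[R]_d}.
Hypotheses (f_SISTr : SISTr f) (k_gt0 : 0 < k) (f_lip : k.-lipschitz f).
Hypothesis eps_spec : forall x delta, 0 < delta -> is_eps f x delta (eps x delta).
Hypothesis D_bounded : bounded_set D.

Lemma eps_bounded delta :
  0 < delta -> exists B, forall x, D x -> eps x delta <= B.
Proof.
move=> delta_gt0; have [r _ Dr] := pinfty_ex_gt0 D_bounded.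
have [E gapE] := gap_unbounded f_SISTr 0 (delta + k *+ 2 * r).
exists E => x Dx; apply: (is_eps_le f_SISTr (eps_spec x delta delta_gt0)).
have := gap_klipschitz E f_lip (x, 0) (conj I I).
rewrite /= subr0 ler_distl => /andP[gap_ge _].
have : k *+ 2 * `|x| <= k *+ 2 * r by rewrite ler_wpM2l ?Dr // mulrn_wge0 // ltW.
lra.
Qed.

Lemma eps_has_ubound {delta} : 0 < delta -> has_ubound [set eps x delta | x in D].
Proof. by move=> /eps_bounded[B epsB]; exists B => _ [x Dx <-]; exact: epsB. Qed.

Lemma sup_eps_homo delta1 delta2 : 0 < delta1 -> delta1 <= delta2 ->
  sup [set eps x delta1 | x in D] <= sup [set eps x delta2 | x in D].
Proof.
move=> delta1_gt0 delta12; have delta2_gt0 := lt_le_trans delta1_gt0 delta12.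
apply: (le_sup_image (eps_has_ubound delta2_gt0)) => x _.
exact: (is_eps_homo f_SISTr (eps_spec x delta1 delta1_gt0)
  (eps_spec x delta2 delta2_gt0) delta12).
Qed.

Lemma sup_eps_cvg0 : sup [set eps x delta | x in D] @[delta --> 0^'+] --> 0.
Proof.
apply/cvgrPdist_le => e e_gt0.
have gap_cont : continuous (fun x => gap f x e).
  by apply: klipschitz_continuous (gap_klipschitz e f_lip); rewrite pmulrn_lgt0.
have [m m_gt0 m_le] := continuous_gt0_bounded_lbound D_bounded gap_cont
  (fun x => gap_gt0 f_SISTr x e e_gt0).
near=> t.
have t_gt0 : 0 < t by near: t; exact: nbhs_right_gt.
rewrite sub0r normrN ger0_norm; last first.
  apply: sup_image_ge0 (eps_has_ubound t_gt0) _ => x _.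
  exact: ltW (proj1 (eps_spec x t t_gt0)).
apply: sup_image_le (ltW e_gt0) _ => x Dx.
apply: (is_eps_le f_SISTr (eps_spec x t t_gt0)).
apply: le_trans (m_le x Dx); near: t; exact: nbhs_right_le.
Unshelve. all: by end_near.
Qed.

End EpsilonBounds.

Theorem lemma4p6 (R : realType) (d : nat) (f : 'rV[R]_d -> R)
  (eps : 'rV[R]_d -> R -> R) :
  [lipschitz f x | x in setT] ->
  SISTr f ->
  (forall x delta, 0 < delta -> is_eps f x delta (eps x delta)) ->
  forall D : set 'rV[R]_d, bounded_set D ->
    (forall delta, 0 < delta ->
       exists B : R, forall x, D x -> eps x delta <= B)
    /\ (forall delta1 delta2, 0 < delta1 -> delta1 <= delta2 ->
          sup [set eps x delta1 | x in D] <= sup [set eps x delta2 | x in D])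
    /\ (sup [set eps x delta | x in D] @[delta --> 0^'+] --> 0).
Proof.
move=> f_lip f_SISTr eps_spec D D_bounded.
have [k k_gt0 f_klip] := pinfty_ex_gt0 f_lip.
split; first exact: eps_bounded f_SISTr k_gt0 f_klip eps_spec D_bounded.
split; first exact: sup_eps_homo f_SISTr k_gt0 f_klip eps_spec D_bounded.
exact: sup_eps_cvg0 f_SISTr k_gt0 f_klip eps_spec D_bounded.
Qed.
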